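(* Let $l,m$ be integers with $|l|>m>0$, let $d=\gcd(l,m)$ and write $l=l_1d$, $m=m_1d$. Let $h\in H(l,m)$ be written as $h=b^{p}v$ with $p\in\mathbb Z$ and $v\in L$. Let $r,s$ be integers. Then $h^{-1}a^{r}h=a^{s}$ holds if and only if $v\in C(a^{s})$ and one of the following holds: $p=0$ and $r=s$; or $p>0$ and $r=l_1^{p}dx$, $s=m_1^{p}dx$ for some integer $x$; or $p<0$ and $r=m_1^{-p}dx$, $s=l_1^{-p}dx$ for some integer $x$.
   Context: $H(l,m)=\langle a,b \mid b^{-1}a^{l}b=a^{m}\rangle$ (Baumslag–Solitar group). $L$ denotes the normal closure of $a$ in $H(l,m)$ (equivalently, the set of elements represented by words in $a,b$ with exponent sum $0$ in $b$); every element of $H(l,m)$ can be written uniquely as $b^p v$ with $p\in\mathbb Z$, $v\in L$. $C(h)$ denotes the centralizer of $h$ in $H(l,m)$. *)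

(* The Baumslag-Solitar group H(l,m) = < a, b | b^-1 a^l b = a^m >
   is modelled as the free monoid on the letters a, b, a^-1, b^-1 (words),
   modulo the smallest equivalence relation containing free cancellation and
   the defining relator, applied anywhere inside a word (this is exactly the
   congruence defining the presented group). *)
From Stdlib Require Import ZArith List Relation_Operators.
Import ListNotations.
Open Scope Z_scope.

Inductive gen : Type := Ga | Gb.

(* a letter: a generator together with a flag "is inverted" *)
Definition letter : Type := (gen * bool)%type.
Definition word : Type := list letter.

Definition inv_letter (x : letter) : letter := (fst x, negb (snd x)).

Definition winv (w : word) : word := rev (map inv_letter w).

Definition gpow (g : gen) (n : Z) : word :=
  if Z.leb 0 n then repeat (g, false) (Z.to_nat n)
  else repeat (g, true) (Z.to_nat (- n)).

Inductive bs_step (l m : Z) : word -> word -> Prop :=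
| bs_free : forall (u v : word) (x : letter),
    bs_step l m (u ++ x :: inv_letter x :: v) (u ++ v)
| bs_rel : forall u v : word,
    bs_step l m (u ++ (Gb, true) :: gpow Ga l ++ (Gb, false) :: v)
                (u ++ gpow Ga m ++ v).

Definition bs_eq (l m : Z) : word -> word -> Prop :=
  clos_refl_sym_trans word (bs_step l m).

Definition letter_bexp (x : letter) : Z :=
  match x with
  | (Gb, false) => 1
  | (Gb, true) => -1
  | (Ga, _) => 0
  end.
Definition bexp (w : word) : Z := fold_right (fun x acc => letter_bexp x + acc) 0 w.
Definition in_L (w : word) : Prop := bexp w = 0.

Definition in_centralizer (l m : Z) (g v : word) : Prop :=
  bs_eq l m (v ++ g) (g ++ v).

(* Sufficiency: since b^-1 a^(l y) b = a^(m y) for every y, induction on p >= 0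
   gives b^-p a^(l1^p d x) b^p = a^(m1^p d x), and inverting it handles p < 0;
   conjugation by h = b^p v is conjugation by b^p followed by conjugation by v.
   Necessity: two representations of H(l,m) detect the exponents.  The affine
   action on Q (a : q |-> q + 1, b : q |-> (l/m) q) turns h^-1 a^r h = a^s into
   r = (l/m)^p s.  The lamplighter action of (Z/d) wr Z (a adds 1 to the lamp
   under the lamplighter, b moves him) is well defined because d divides l and
   m; when p <> 0 it sees a lamp r at position p and a lamp s at position 0, so
   d divides r and s.  Since l1 and m1 are coprime, these two facts force the
   stated parametrisation; once b^-p a^r b^p = a^s, the remaining condition on v
   is exactly that v centralises a^s. *)
From Stdlib Require Import ZArith List Lia Relation_Operators Setoid Morphisms.
From Stdlib Require Import QArith Qpower Znumtheory Zpow_facts.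
Import ListNotations.
Open Scope Z_scope.

#[export] Instance bs_eq_Equivalence l m : Equivalence (bs_eq l m).
Proof. split; [exact (rst_refl _ _) | exact (rst_sym _ _) | exact (rst_trans _ _)]. Qed.

Lemma bs_step_context l m u w x y :
  bs_step l m x y -> bs_step l m (u ++ x ++ w) (u ++ y ++ w).
Proof.
  intros [u0 v0 c | u0 v0].
  - replace (u ++ (u0 ++ c :: inv_letter c :: v0) ++ w)
      with ((u ++ u0) ++ c :: inv_letter c :: v0 ++ w) by now rewrite <- !app_assoc.
    replace (u ++ (u0 ++ v0) ++ w) with ((u ++ u0) ++ v0 ++ w) by now rewrite <- !app_assoc.
    constructor.
  - replace (u ++ (u0 ++ (Gb, true) :: gpow Ga l ++ (Gb, false) :: v0) ++ w)
      with ((u ++ u0) ++ (Gb, true) :: gpow Ga l ++ (Gb, false) :: v0 ++ w)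
      by now rewrite <- !app_assoc, <- app_comm_cons, <- app_assoc.
    replace (u ++ (u0 ++ gpow Ga m ++ v0) ++ w) with ((u ++ u0) ++ gpow Ga m ++ v0 ++ w)
      by now rewrite <- !app_assoc.
    constructor.
Qed.

Lemma bs_eq_context l m u w x y :
  bs_eq l m x y -> bs_eq l m (u ++ x ++ w) (u ++ y ++ w).
Proof.
  induction 1 as [x y Hxy | | | ].
  - now apply rst_step, bs_step_context.
  - reflexivity.
  - now symmetry.
  - etransitivity; eassumption.
Qed.

#[export] Instance app_bs_eq_Proper l m :
  Proper (bs_eq l m ==> bs_eq l m ==> bs_eq l m) (@app letter).
Proof.
  intros x y Hxy x' y' Hxy'.
  transitivity (y ++ x').
  - exact (bs_eq_context l m [] x' x y Hxy).
  - pose proof (bs_eq_context l m y [] x' y' Hxy') as H; now rewrite !app_nil_r in H.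
Qed.

Lemma winv_app u w : winv (u ++ w) = winv w ++ winv u.
Proof. unfold winv; now rewrite map_app, rev_app_distr. Qed.

Lemma winv_involutive w : winv (winv w) = w.
Proof.
  unfold winv; rewrite map_rev, rev_involutive, map_map.
  induction w as [|[g e] w IH]; simpl; [reflexivity|].
  unfold inv_letter at 1 2; simpl; now rewrite Bool.negb_involutive, IH.
Qed.

Lemma app_winv_r l m w : bs_eq l m (w ++ winv w) [].
Proof.
  induction w as [|x w IH]; [reflexivity|].
  change (x :: w) with ([x] ++ w).
  rewrite winv_app, app_assoc, <- (app_assoc [x]), IH.
  apply rst_step; exact (bs_free l m [] [] x).
Qed.

Lemma app_winv_l l m w : bs_eq l m (winv w ++ w) [].
Proof. rewrite <- (winv_involutive w) at 2; apply app_winv_r. Qed.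

#[export] Instance winv_Proper l m : Proper (bs_eq l m ==> bs_eq l m) winv.
Proof.
  intros x y Hxy.
  transitivity (winv x ++ y ++ winv y).
  - now rewrite app_winv_r, app_nil_r.
  - now rewrite <- Hxy at 1; rewrite app_assoc, app_winv_l.
Qed.

Lemma gpow_opp g n : gpow g (- n) = winv (gpow g n).
Proof.
  unfold gpow, winv.
  destruct (Z.leb_spec 0 n), (Z.leb_spec 0 (- n));
    rewrite ?map_repeat, ?rev_repeat, ?Z.opp_involutive; try reflexivity; try lia.
  now replace n with 0 by lia.
Qed.

Lemma gpow_succ l m g n : bs_eq l m (gpow g (n + 1)) (gpow g n ++ [(g, false)]).
Proof.
  unfold gpow.
  destruct (Z.leb_spec 0 n), (Z.leb_spec 0 (n + 1)); try lia.
  - now rewrite Z2Nat.inj_add, repeat_app by lia.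
  - replace n with (-1) by lia; symmetry; apply rst_step, (bs_free l m [] [] (g, true)).
  - replace (Z.to_nat (- n)) with (Z.to_nat (- (n + 1)) + 1)%nat by lia.
    rewrite repeat_app, <- app_assoc; simpl.
    rewrite (rst_step _ _ _ _ (bs_free l m [] [] (g, true))), app_nil_r.
    reflexivity.
Qed.

Lemma gpow_pred l m g n : bs_eq l m (gpow g (n - 1)) (gpow g n ++ [(g, true)]).
Proof.
  replace n with (n - 1 + 1) at 2 by lia.
  rewrite gpow_succ, <- app_assoc.
  rewrite (rst_step _ _ _ _ (bs_free l m [] [] (g, false))), app_nil_r.
  reflexivity.
Qed.

Lemma gpow_add l m g n k : bs_eq l m (gpow g (n + k)) (gpow g n ++ gpow g k).
Proof.
  induction k as [| k IH | k IH] using Z.peano_ind.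
  - now rewrite Z.add_0_r, app_nil_r.
  - rewrite <- Z.add_1_r, Z.add_assoc, !gpow_succ, IH, app_assoc; reflexivity.
  - rewrite <- Z.sub_1_r, Z.add_sub_assoc, !gpow_pred, IH, app_assoc; reflexivity.
Qed.

Lemma bexp_app u w : bexp (u ++ w) = bexp u + bexp w.
Proof. induction u as [|c u IH]; simpl; lia. Qed.

Lemma bexp_gpow_b p : bexp (gpow Gb p) = p.
Proof.
  assert (Hrep : forall e n, bexp (repeat (Gb, e) n) = if e then - Z.of_nat n else Z.of_nat n).
  { intros e n; induction n as [|n IH]; [now destruct e|].
    change (bexp (repeat (Gb, e) (S n))) with (letter_bexp (Gb, e) + bexp (repeat (Gb, e) n)).
    rewrite IH, Nat2Z.inj_succ; destruct e; cbn [letter_bexp]; lia. }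
  unfold gpow; destruct (Z.leb_spec 0 p); rewrite Hrep; lia.
Qed.

Definition wconj (h w : word) : word := winv h ++ w ++ h.

#[export] Instance wconj_Proper l m : Proper (bs_eq l m ==> bs_eq l m ==> bs_eq l m) wconj.
Proof. intros h h' Hh w w' Hw; unfold wconj; now rewrite Hh, Hw. Qed.

Lemma wconj_app u w x : wconj (u ++ w) x = wconj w (wconj u x).
Proof. unfold wconj; rewrite winv_app; now rewrite <- !app_assoc. Qed.

Lemma wconj_app_distr l m h x y :
  bs_eq l m (wconj h (x ++ y)) (wconj h x ++ wconj h y).
Proof.
  unfold wconj; rewrite <- !app_assoc, (app_assoc h (winv h)), app_winv_r.
  reflexivity.
Qed.

Lemma wconj_winv h x : wconj h (winv x) = winv (wconj h x).
Proof. unfold wconj; now rewrite !winv_app, winv_involutive, app_assoc. Qed.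

Lemma wconj_eq_iff l m h x y :
  bs_eq l m (wconj h x) y <-> bs_eq l m (x ++ h) (h ++ y).
Proof.
  unfold wconj; split; intros H.
  - rewrite <- H, !app_assoc, app_winv_r; reflexivity.
  - rewrite H, app_assoc, app_winv_l; reflexivity.
Qed.

Lemma wconj_winv_l l m h x y :
  bs_eq l m (wconj h x) y -> bs_eq l m (wconj (winv h) y) x.
Proof.
  rewrite !wconj_eq_iff; intros H; symmetry.
  transitivity (winv h ++ (x ++ h) ++ winv h).
  - now rewrite <- app_assoc, app_winv_r, app_nil_r.
  - rewrite H, <- app_assoc, app_assoc, app_winv_l; reflexivity.
Qed.

Lemma wconj_b_apow_rel l m : bs_eq l m (wconj (gpow Gb 1) (gpow Ga l)) (gpow Ga m).
Proof.
  apply rst_step.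
  pose proof (bs_rel l m [] []) as H; rewrite app_nil_r in H; exact H.
Qed.

Lemma wconj_b_apow l m x : bs_eq l m (wconj (gpow Gb 1) (gpow Ga (l * x))) (gpow Ga (m * x)).
Proof.
  induction x as [| x IH | x IH] using Z.peano_ind.
  - rewrite !Z.mul_0_r; unfold wconj; simpl.
    apply rst_step, (bs_free l m [] [] (Gb, true)).
  - rewrite <- Z.add_1_r, !Z.mul_add_distr_l, !Z.mul_1_r, !gpow_add,
      wconj_app_distr, IH, wconj_b_apow_rel; reflexivity.
  - rewrite <- Z.sub_1_r, !Z.mul_sub_distr_l, !Z.mul_1_r, <- !Z.add_opp_r, !gpow_add,
      !gpow_opp, wconj_app_distr, wconj_winv, IH, wconj_b_apow_rel; reflexivity.
Qed.

Lemma wconj_bpow_apow l m l1 m1 d (Hl : l = l1 * d) (Hm : m = m1 * d) n x :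
  0 <= n ->
  bs_eq l m (wconj (gpow Gb n) (gpow Ga (l1 ^ n * d * x))) (gpow Ga (m1 ^ n * d * x)).
Proof.
  intros Hn; revert x; pattern n; apply natlike_ind; [| clear n Hn; intros n Hn IH | exact Hn];
    intros x.
  - change (gpow Gb 0) with (@nil letter); unfold wconj; now rewrite app_nil_r.
  - rewrite !Z.pow_succ_r, <- Z.add_1_r, gpow_add, wconj_app by exact Hn.
    replace (l1 * l1 ^ n * d * x) with (l1 ^ n * d * (l1 * x)) by ring.
    rewrite IH.
    replace (m1 ^ n * d * (l1 * x)) with (l * (m1 ^ n * x)) by (subst; ring).
    rewrite wconj_b_apow.
    replace (m * (m1 ^ n * x)) with (m1 * m1 ^ n * d * x) by (subst; ring).
    reflexivity.
Qed.

Lemma wconj_bpow_apow_opp l m l1 m1 d (Hl : l = l1 * d) (Hm : m = m1 * d) n x :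
  0 <= n ->
  bs_eq l m (wconj (gpow Gb (- n)) (gpow Ga (m1 ^ n * d * x))) (gpow Ga (l1 ^ n * d * x)).
Proof.
  intros Hn; rewrite gpow_opp; apply wconj_winv_l, (wconj_bpow_apow l m); assumption.
Qed.

Definition act_word {X : Type} (act : letter -> X -> X) (w : word) (x : X) : X :=
  fold_right act x w.

Lemma act_word_app {X : Type} (act : letter -> X -> X) u w x :
  act_word act (u ++ w) x = act_word act u (act_word act w x).
Proof. apply fold_right_app. Qed.

Section WordAction.

Context {X : Type} (eqv : relation X) `{Equivalence X eqv} (act : letter -> X -> X).
Variables l m : Z.
Hypothesis act_Proper : forall c, Proper (eqv ==> eqv) (act c).
Hypothesis act_inv_letter : forall c x, eqv (act c (act (inv_letter c) x)) x.
Hypothesis act_relator : forall x,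
  eqv (act_word act (wconj (gpow Gb 1) (gpow Ga l)) x) (act_word act (gpow Ga m) x).

Lemma act_word_Proper w : Proper (eqv ==> eqv) (act_word act w).
Proof. induction w as [|c w IH]; intros y z Hyz; simpl; [exact Hyz | now apply act_Proper, IH]. Qed.

Lemma act_word_bs_eq w1 w2 :
  bs_eq l m w1 w2 -> forall x, eqv (act_word act w1 x) (act_word act w2 x).
Proof.
  induction 1 as [? ? [u v c | u v] | | ? ? _ IH | ? ? ? _ IH1 _ IH2]; intros s.
  - rewrite !act_word_app; apply act_word_Proper, act_inv_letter.
  - replace ((Gb, true) :: gpow Ga l ++ (Gb, false) :: v)
      with (wconj (gpow Gb 1) (gpow Ga l) ++ v) by (simpl; now rewrite <- app_assoc).
    rewrite !act_word_app; apply act_word_Proper, act_relator.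
  - reflexivity.
  - now symmetry.
  - now rewrite IH1.
Qed.

End WordAction.

Definition affine_act (lam : Q) (c : letter) (q : Q) : Q :=
  match c with
  | (Ga, false) => q + 1
  | (Ga, true) => q - 1
  | (Gb, false) => q * lam
  | (Gb, true) => q / lam
  end%Q.

Lemma affine_act_apow lam k q :
  (act_word (affine_act lam) (gpow Ga k) q == q + inject_Z k)%Q.
Proof.
  assert (Hrep : forall e n, (act_word (affine_act lam) (repeat (Ga, e) n) q
                  == q + inject_Z (if e then - Z.of_nat n else Z.of_nat n))%Q).
  { intros e n; induction n as [|n IH]; [destruct e; simpl; ring|].
    change (act_word _ (repeat (Ga, e) (S n)) q)
      with (affine_act lam (Ga, e) (act_word (affine_act lam) (repeat (Ga, e) n) q)).
    rewrite Nat2Z.inj_succ, <- Z.add_1_r.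
    destruct e; simpl; rewrite IH, ?Z.opp_add_distr, inject_Z_plus; simpl; ring. }
  unfold gpow; destruct (Z.leb_spec 0 k); rewrite Hrep, Z2Nat.id by lia;
    rewrite ?Z.opp_involutive; reflexivity.
Qed.

Lemma affine_act_word lam w q : ~ (lam == 0)%Q ->
  (act_word (affine_act lam) w q
   == lam ^ bexp w * q + act_word (affine_act lam) w 0)%Q.
Proof.
  intros Hlam; induction w as [|c w IH]; [simpl; ring|].
  change (bexp (c :: w)) with (letter_bexp c + bexp w).
  change (act_word _ (c :: w) ?x) with (affine_act lam c (act_word (affine_act lam) w x)).
  destruct c as [[|] [|]]; cbn [affine_act letter_bexp]; rewrite IH;
    rewrite ?Z.add_0_l, ?Qpower_plus by exact Hlam; simpl; field; exact Hlam.
Qed.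

Lemma inject_Z_neq_0 z : z <> 0 -> ~ (inject_Z z == 0)%Q.
Proof. intros Hz E; apply Hz, (proj1 (inject_Z_injective z 0)), E. Qed.

Lemma affine_act_bs_eq l m w1 w2 : l <> 0 -> m <> 0 -> bs_eq l m w1 w2 ->
  forall q, (act_word (affine_act (inject_Z l / inject_Z m)) w1 q
             == act_word (affine_act (inject_Z l / inject_Z m)) w2 q)%Q.
Proof.
  intros Hl Hm; pose proof (inject_Z_neq_0 l Hl); pose proof (inject_Z_neq_0 m Hm).
  apply act_word_bs_eq; [exact Q_Setoid | | |].
  - intros [[|] [|]] q q' Hq; cbn; now rewrite Hq.
  - intros [[|] [|]] q; cbn; field; auto.
  - intros q; change (wconj (gpow Gb 1) (gpow Ga l)) with ([(Gb, true)] ++ gpow Ga l ++ [(Gb, false)]).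
    rewrite !act_word_app; cbn -[gpow]; rewrite !affine_act_apow.
    field; auto.
Qed.

Lemma wconj_apow_ratio l m h r s : l <> 0 -> m <> 0 ->
  bs_eq l m (wconj h (gpow Ga r)) (gpow Ga s) ->
  (inject_Z r == (inject_Z l / inject_Z m) ^ bexp h * inject_Z s)%Q.
Proof.
  intros Hl Hm Hconj; apply wconj_eq_iff in Hconj.
  set (lam := (inject_Z l / inject_Z m)%Q).
  assert (Hlam : ~ (lam == 0)%Q).
  { unfold lam; intros E; apply (inject_Z_neq_0 l Hl).
    rewrite <- (Qmult_0_l (inject_Z m)), <- E; field; now apply inject_Z_neq_0. }
  pose proof (affine_act_bs_eq l m _ _ Hl Hm Hconj 0%Q) as E; fold lam in E.
  rewrite !act_word_app,
    (affine_act_word lam h (act_word (affine_act lam) (gpow Ga s) 0%Q)), !affine_act_apow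
    in E by exact Hlam.
  setoid_replace (inject_Z r)
    with (act_word (affine_act lam) h 0 + inject_Z r - act_word (affine_act lam) h 0)%Q
    by ring.
  rewrite E; ring.
Qed.

Lemma Qdiv_power_opp a b n : ((a / b) ^ (- n) == (b / a) ^ n)%Q.
Proof.
  rewrite Qpower_opp, <- Qinv_power; unfold Qdiv.
  now rewrite Qinv_mult_distr, Qinv_involutive, Qmult_comm.
Qed.

Lemma ratio_pow_cross_mul l m n r s : m <> 0 -> 0 <= n ->
  (inject_Z r == (inject_Z l / inject_Z m) ^ n * inject_Z s)%Q -> r * m ^ n = s * l ^ n.
Proof.
  intros Hm Hn E.
  assert (Hmn : m ^ n <> 0) by (apply Z.pow_nonzero; lia).
  apply inject_Z_injective; rewrite !inject_Z_mult, E, !Zpower_Qpower by exact Hn.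
  unfold Qdiv; rewrite Qmult_power, Qinv_power.
  field; rewrite <- Zpower_Qpower by exact Hn; now apply inject_Z_neq_0.
Qed.

Lemma mod_add_divide d a k : (d | k) -> (a + k) mod d = a mod d.
Proof. intros [q ->]; apply Z_mod_plus_full. Qed.

Lemma divide_of_mod_add d a k : d <> 0 -> (a + k) mod d = a mod d -> (d | k).
Proof.
  intros Hd E; apply Z.mod_divide; [exact Hd|].
  replace k with (a + k - a) by ring.
  now rewrite Zminus_mod, E, Z.sub_diag.
Qed.

Definition bump (f : Z -> Z) (n k : Z) : Z -> Z :=
  fun i => if i =? n then f i + k else f i.

(* A state (f, n) is a lamp configuration f with the lamplighter at n. *)
Definition lamp_act (c : letter) (st : (Z -> Z) * Z) : (Z -> Z) * Z :=
  let (f, n) := st in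
  match c with
  | (Ga, false) => (bump f n 1, n)
  | (Ga, true) => (bump f n (-1), n)
  | (Gb, false) => (f, n + 1)
  | (Gb, true) => (f, n - 1)
  end.

Definition lamp_congr (d : Z) (st st' : (Z -> Z) * Z) : Prop :=
  snd st = snd st' /\ forall i, fst st i mod d = fst st' i mod d.

#[export] Instance lamp_congr_Equivalence d : Equivalence (lamp_congr d).
Proof.
  split.
  - now intros st.
  - intros st st' [Hn Hf]; split; congruence.
  - intros st st' st'' [Hn Hf] [Hn' Hf']; split; congruence.
Qed.

Lemma lamp_act_apow k f n :
  snd (act_word lamp_act (gpow Ga k) (f, n)) = n /\
  forall i, fst (act_word lamp_act (gpow Ga k) (f, n)) i = bump f n k i.
Proof.
  assert (Hrep : forall e j,
    snd (act_word lamp_act (repeat (Ga, e) j) (f, n)) = n /\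
    forall i, fst (act_word lamp_act (repeat (Ga, e) j) (f, n)) i
              = bump f n (if e then - Z.of_nat j else Z.of_nat j) i).
  { intros e j; induction j as [|j [IHn IHf]].
    - split; [reflexivity|]; intros i; unfold bump; destruct e, (i =? n); simpl; lia.
    - change (act_word lamp_act (repeat (Ga, e) (S j)) (f, n))
        with (lamp_act (Ga, e) (act_word lamp_act (repeat (Ga, e) j) (f, n))).
      destruct (act_word lamp_act (repeat (Ga, e) j) (f, n)) as [F N];
        simpl in IHn, IHf; subst N.
      split; [now destruct e|]; intros i.
      specialize (IHf i); rewrite Nat2Z.inj_succ; cbv beta iota delta [lamp_act bump fst] in *.
      destruct e, (i =? n); lia. }
  unfold gpow; destruct (Z.leb_spec 0 k).
  - destruct (Hrep false (Z.to_nat k)) as [Hn Hf]; split; [exact Hn|].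
    intros i; now rewrite Hf, Z2Nat.id by lia.
  - destruct (Hrep true (Z.to_nat (- k))) as [Hn Hf]; split; [exact Hn|].
    intros i; now rewrite Hf, Z2Nat.id, Z.opp_involutive by lia.
Qed.

Lemma lamp_act_word_additive h f n :
  snd (act_word lamp_act h (f, n)) = n + bexp h /\
  forall i, fst (act_word lamp_act h (f, n)) i
            = f i + fst (act_word lamp_act h (fun _ => 0, n)) i.
Proof.
  revert f; induction h as [|c h IH]; intros f; [split; simpl; lia|].
  change (bexp (c :: h)) with (letter_bexp c + bexp h).
  change (act_word lamp_act (c :: h) ?st) with (lamp_act c (act_word lamp_act h st)).
  destruct (IH f) as [Hn Hf], (IH (fun _ => 0)) as [Hn0 _].
  destruct (act_word lamp_act h (f, n)) as [F N],
    (act_word lamp_act h (fun _ => 0, n)) as [G M];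
    simpl in Hn, Hn0, Hf |- *; subst N M.
  destruct c as [[|] [|]]; cbv beta iota delta [lamp_act bump fst snd letter_bexp];
    (split; [lia|]); intros i; rewrite ?Hf; try reflexivity.
  all: destruct (i =? n + bexp h); lia.
Qed.

Lemma lamp_act_bs_eq l m d w1 w2 : d <> 0 -> (d | l) -> (d | m) -> bs_eq l m w1 w2 ->
  forall st, lamp_congr d (act_word lamp_act w1 st) (act_word lamp_act w2 st).
Proof.
  intros Hd Hdl Hdm; apply act_word_bs_eq; [exact (lamp_congr_Equivalence d) | | |].
  - intros c [f n] [f' n'] [Hn Hf]; simpl in Hn, Hf; subst n'.
    destruct c as [[|] [|]]; split; cbn; auto; intros i; unfold bump;
      destruct (i =? n); auto; now rewrite <- Z.add_mod_idemp_l, Hf, Z.add_mod_idemp_l.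
  - intros [[|] [|]] [f n]; split; cbn; try lia; intros i; unfold bump; try reflexivity;
      destruct (i =? n); f_equal; lia.
  - intros [f n]; change (wconj (gpow Gb 1) (gpow Ga l))
      with ([(Gb, true)] ++ gpow Ga l ++ [(Gb, false)]).
    rewrite !act_word_app; cbn -[gpow].
    destruct (lamp_act_apow l f (n + 1)) as [Hln Hlf], (lamp_act_apow m f n) as [Hmn Hmf].
    destruct (act_word lamp_act (gpow Ga l) (f, n + 1)) as [F N],
      (act_word lamp_act (gpow Ga m) (f, n)) as [G M]; simpl in *; subst N M.
    split; [simpl; lia|]; intros i; simpl; rewrite Hlf, Hmf; unfold bump.
    destruct (Z.eqb_spec i (n + 1)), (Z.eqb_spec i n); try lia.
    + now apply mod_add_divide.
    + now symmetry; apply mod_add_divide.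
Qed.

Lemma wconj_apow_divisible l m d h r s : d <> 0 -> (d | l) -> (d | m) -> bexp h <> 0 ->
  bs_eq l m (wconj h (gpow Ga r)) (gpow Ga s) -> (d | r) /\ (d | s).
Proof.
  intros Hd Hdl Hdm Hp Hconj; apply wconj_eq_iff in Hconj.
  (* Compare a^r h and h a^s on the empty configuration at the lamps bexp h and 0. *)
  pose proof (lamp_act_bs_eq l m d _ _ Hd Hdl Hdm Hconj (fun _ => 0, 0)) as [_ E].
  rewrite !act_word_app in E.
  destruct (lamp_act_word_additive h (fun _ => 0) 0) as [HN _].
  destruct (lamp_act_apow s (fun _ => 0) 0) as [Hs0 Hsf].
  destruct (act_word lamp_act (gpow Ga s) (fun _ => 0, 0)) as [F n0]; simpl in Hs0, Hsf; subst n0.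
  destruct (lamp_act_word_additive h F 0) as [_ HF].
  destruct (act_word lamp_act h (fun _ => 0, 0)) as [G N]; simpl in HN, HF.
  destruct (lamp_act_apow r G N) as [_ Hrf].
  split.
  - specialize (E N); rewrite Hrf, HF, Hsf in E; unfold bump in E.
    rewrite Z.eqb_refl, (proj2 (Z.eqb_neq N 0)) in E by lia.
    now apply divide_of_mod_add with (G N).
  - specialize (E 0); rewrite Hrf, HF, Hsf in E; unfold bump in E.
    rewrite Z.eqb_refl, (proj2 (Z.eqb_neq 0 N)) in E by lia.
    apply divide_of_mod_add with (G 0); [exact Hd|].
    now rewrite E, Z.add_0_l, Z.add_comm.
Qed.

Lemma gcd_cofactors l m : m <> 0 ->
  let d := Z.gcd l m in
  0 < d /\ l = l / d * d /\ m = m / d * d /\ Z.gcd (l / d) (m / d) = 1.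
Proof.
  intros Hm d.
  assert (Hd : 0 < d).
  { pose proof (Z.gcd_nonneg l m); enough (d <> 0) by lia.
    intros E; apply Hm, (Z.gcd_eq_0_r l m), E. }
  assert (Hexact : forall a, (d | a) -> a = a / d * d).
  { intros a [k ->]; rewrite Z.div_mul; lia. }
  split; [exact Hd|]; split; [|split].
  - apply Hexact, Z.gcd_divide_l.
  - apply Hexact, Z.gcd_divide_r.
  - apply Z.gcd_div_gcd; [lia | reflexivity].
Qed.

Lemma cross_pow_eq_param A1 B1 d n r s :
  0 <= n -> d <> 0 -> A1 <> 0 -> Z.gcd A1 B1 = 1 ->
  r * (B1 * d) ^ n = s * (A1 * d) ^ n -> (d | r) -> (d | s) ->
  exists x, r = A1 ^ n * d * x /\ s = B1 ^ n * d * x.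
Proof.
  intros Hn Hd HA1 Hg E Hdr Hds.
  assert (Hdn : d ^ n <> 0) by (apply Z.pow_nonzero; lia).
  assert (HAn : A1 ^ n <> 0) by (apply Z.pow_nonzero; lia).
  rewrite !Z.pow_mul_l, !Z.mul_assoc in E; apply Z.mul_cancel_r in E; [|exact Hdn].
  assert (Hgn : Z.gcd (A1 ^ n) (B1 ^ n) = 1).
  { now apply Zgcd_1_rel_prime, rel_prime_Zpower, Zgcd_1_rel_prime. }
  destruct (Z.gauss (A1 ^ n) (B1 ^ n) r) as [y Hy]; [exists s; lia | exact Hgn |].
  assert (Hs : s = y * B1 ^ n).
  { apply (Z.mul_cancel_r _ _ (A1 ^ n)); [exact HAn|]; rewrite <- E, Hy; ring. }
  assert (Hdy : (d | y)).
  { apply Z.divide_abs_r; rewrite <- (Z.mul_1_r (Z.abs y)), <- Hgn, <- Z.gcd_mul_mono_l.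
    apply Z.gcd_greatest; [rewrite <- Hy | rewrite <- Hs]; assumption. }
  destruct Hdy as [x ->]; exists x; split; [rewrite Hy | rewrite Hs]; ring.
Qed.

Definition apow_conj_exponents (l m p r s : Z) : Prop :=
  let d := Z.gcd l m in
  let l1 := l / d in
  let m1 := m / d in
  (p = 0 /\ r = s) \/
  (p > 0 /\ exists x : Z, r = l1 ^ p * d * x /\ s = m1 ^ p * d * x) \/
  (p < 0 /\ exists x : Z, r = m1 ^ (- p) * d * x /\ s = l1 ^ (- p) * d * x).

Lemma wconj_bpow_apow_of_exponents l m p r s : m <> 0 ->
  apow_conj_exponents l m p r s -> bs_eq l m (wconj (gpow Gb p) (gpow Ga r)) (gpow Ga s).
Proof.
  intros Hm; destruct (gcd_cofactors l m Hm) as (_ & Hl & Hm' & _).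
  intros [[-> ->] | [[Hp (x & -> & ->)] | [Hp (x & -> & ->)]]].
  - unfold wconj; simpl; now rewrite app_nil_r.
  - apply wconj_bpow_apow; [exact Hl | exact Hm' | lia].
  - rewrite <- (Z.opp_involutive p) at 1.
    apply wconj_bpow_apow_opp; [exact Hl | exact Hm' | lia].
Qed.

Lemma exponents_of_wconj_apow l m h r s : l <> 0 -> m <> 0 ->
  bs_eq l m (wconj h (gpow Ga r)) (gpow Ga s) -> apow_conj_exponents l m (bexp h) r s.
Proof.
  intros Hl Hm Hconj.
  pose proof (wconj_apow_ratio l m h r s Hl Hm Hconj) as Hratio.
  destruct (gcd_cofactors l m Hm) as (Hd & Hl1 & Hm1 & Hg).
  unfold apow_conj_exponents; set (d := Z.gcd l m) in *.
  set (l1 := l / d) in *; set (m1 := m / d) in *.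
  assert (Hl10 : l1 <> 0) by (intros E; rewrite E in Hl1; lia).
  assert (Hm10 : m1 <> 0) by (intros E; rewrite E in Hm1; lia).
  assert (Hdiv : bexp h <> 0 -> (d | r) /\ (d | s)).
  { intros Hp; apply (wconj_apow_divisible l m d h); [lia | apply Z.gcd_divide_l |
      apply Z.gcd_divide_r | exact Hp | exact Hconj]. }
  destruct (Z.lt_trichotomy (bexp h) 0) as [Hp | [Hp | Hp]].
  - right; right; split; [exact Hp|].
    rewrite <- (Z.opp_involutive (bexp h)), Qdiv_power_opp in Hratio.
    apply ratio_pow_cross_mul in Hratio; [|exact Hl | lia].
    destruct Hdiv as [Hdr Hds]; [lia|].
    apply cross_pow_eq_param; [lia | lia | exact Hm10 | now rewrite Z.gcd_comm | | exact Hdr | exact Hds].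
    now rewrite <- Hl1, <- Hm1.
  - left; split; [exact Hp|]; rewrite Hp in Hratio.
    apply inject_Z_injective; rewrite Hratio; simpl; ring.
  - right; left; split; [lia|].
    apply ratio_pow_cross_mul in Hratio; [|exact Hm | lia].
    destruct Hdiv as [Hdr Hds]; [lia|].
    apply cross_pow_eq_param; [lia | lia | exact Hl10 | exact Hg | | exact Hdr | exact Hds].
    now rewrite <- Hl1, <- Hm1.
Qed.

Theorem proposition1 (l m : Z) (Hlm : Z.abs l > m) (Hm : m > 0)
  (p : Z) (v : word) (Hv : in_L v) (r s : Z) :
  let d := Z.gcd l m in
  let l1 := l / d in
  let m1 := m / d in
  let h := gpow Gb p ++ v in
  bs_eq l m (winv h ++ gpow Ga r ++ h) (gpow Ga s)
  <->
  (in_centralizer l m (gpow Ga s) v /\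
   ((p = 0 /\ r = s) \/
    (p > 0 /\ exists x : Z, r = l1 ^ p * d * x /\ s = m1 ^ p * d * x) \/
    (p < 0 /\ exists x : Z, r = m1 ^ (- p) * d * x /\ s = l1 ^ (- p) * d * x))).
Proof.
  cbv zeta.
  change (bs_eq l m (wconj (gpow Gb p ++ v) (gpow Ga r)) (gpow Ga s) <->
          in_centralizer l m (gpow Ga s) v /\ apow_conj_exponents l m p r s).
  assert (Hbexp : bexp (gpow Gb p ++ v) = p).
  { unfold in_L in Hv; now rewrite bexp_app, bexp_gpow_b, Hv, Z.add_0_r. }
  split.
  - intros Hconj.
    assert (Hexp : apow_conj_exponents l m p r s).
    { rewrite <- Hbexp; apply exponents_of_wconj_apow; [lia | lia | exact Hconj]. }
    split; [| exact Hexp].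
    rewrite wconj_app, (wconj_bpow_apow_of_exponents l m p r s) in Hconj by (lia || exact Hexp).
    unfold in_centralizer; symmetry; now apply wconj_eq_iff.
  - intros [Hcent Hexp].
    rewrite wconj_app, (wconj_bpow_apow_of_exponents l m p r s) by (lia || exact Hexp).
    apply wconj_eq_iff; now symmetry.
Qed.
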